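(* Let $x\in\mathbb X$, $B\Subset\mathbb X\setminus\{x\}$ and $Y\in\mathbf F(x)$ with $Y\cap B=\varnothing$. Then \[ \max\Big\{|W(Y\mid B)|,\ 1+|W(Y\mid B)-1|\alpha^S\ \Big|\ \varnothing\neq S\subset Y\setminus\{x\}\Big\} \le\prod_{\substack{X\in\mathbf F(x):\\ X\setminus B=Y}}\max\Big\{|W(X)|,\ 1+|W(X)-1|\alpha^S\ \Big|\ \varnothing\neq S\subset X\setminus(\{x\}\cup B)\Big\}. \]
   Context: $\mathbb X$ is a finite or countably infinite set; $X\Subset\mathbb X$ means finite subset; $\mathbf F$ is the set of finite subsets of $\mathbb X$ and $\mathbf F(x)=\{X\Subset\mathbb X\mid x\in X\}$. Fix $W:\mathbf F\to\mathbb C$, $r:\mathbb X\to[0,1)$, $\alpha=\frac r{1-r}$, and write $\alpha^S=\prod_{s\in S}\alpha(s)$. The conditional interaction is $W(X\mid B)=\prod_{C\subset B}W(X\cup C)$ if $X\cap B=\varnothing$, $W(X\mid B)=0$ if $X=\{y\}$ with $y\in B$, and $W(X\mid B)=1$ otherwise. A maximum $\max\{a,\ b_S\mid S\in\mathcal S\}$ denotes the maximum of $a$ together with all $b_S$, $S\in\mathcal S$ (it equals $a$ if $\mathcal S=\varnothing$). *)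

From HB Require Import structures.
From mathcomp Require Import all_boot all_order all_algebra.
From mathcomp Require Import finmap.
From mathcomp Require Import complex.
From mathcomp Require Import reals.
Set Implicit Arguments. Unset Strict Implicit. Unset Printing Implicit Defensive.
Import Order.TTheory GRing.Theory Num.Theory.
Local Open Scope ring_scope.
Local Open Scope fset_scope.

(* The ambient set \mathbb X is a countable type T (finite or countably infinite);
   finite subsets X ⋐ \mathbb X are elements of {fset T}. *)

Definition cabs (R : realType) (z : R[i]) : R := Normc.normc z.

Definition alpha (T : countType) (R : realType) (r : T -> R) (s : T) : R :=
  r s / (1 - r s).

Definition alphaS (T : countType) (R : realType) (r : T -> R) (S : {fset T}) : R :=
  \prod_(s <- S) alpha r s.

Definition Wcond (T : countType) (R : realType) (W : {fset T} -> R[i])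
    (X B : {fset T}) : R[i] :=
  if X `&` B == fset0 then \prod_(C <- fpowerset B) W (X `|` C)
  else if [exists y : B, X == [fset val y]] then 0
  else 1.

Definition maxQ (T : countType) (R : realType) (r : T -> R) (Z : R[i])
    (U : {fset T}) : R :=
  \big[Num.max/cabs Z]_(S <- fpowerset U | S != fset0)
     (1 + cabs (Z - 1) * alphaS r S)%R.

(* W(Y | B) is the product of the W(X) over X = Y ∪ C, C ⊆ B, and these X are
   exactly the X ∋ x with X \ B = Y; for each of them X \ ({x} ∪ B) = Y \ {x}.
   So it suffices that Z ↦ max{|Z|, 1 + |Z - 1| α^S | ∅ ≠ S ⊆ U} is
   submultiplicative, which follows from Z1 Z2 - 1 = Z1 (Z2 - 1) + (Z1 - 1). *)
From HB Require Import structures.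
From mathcomp Require Import all_boot all_order all_algebra.
From mathcomp Require Import finmap complex reals ring.
Set Implicit Arguments. Unset Strict Implicit. Unset Printing Implicit Defensive.
Import Order.TTheory GRing.Theory Num.Theory.
Local Open Scope ring_scope.

Lemma cabs_ge0 (R : realType) (z : R[i]) : 0 <= cabs z.
Proof. by case: z => a b; rewrite /cabs /Normc.normc sqrtr_ge0. Qed.

Lemma alpha_ge0 (T : countType) (R : realType) (r : T -> R) s :
  0 <= r s < 1 -> 0 <= alpha r s.
Proof. by case/andP=> r_ge0 r_lt1; rewrite /alpha divr_ge0 // subr_ge0 ltW. Qed.

Section MaxQ.
Variables (T : countType) (R : realType) (r : T -> R).
Hypothesis alpha_r_ge0 : forall s, 0 <= alpha r s.

Lemma alphaS_ge0 S : 0 <= alphaS r S.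
Proof. exact: prodr_ge0. Qed.

Lemma maxQ_ge_cabs Z U : cabs Z <= maxQ r Z U.
Proof.
apply: (big_rec (fun m => cabs Z <= m)) => // S m _ Zm.
by rewrite le_max Zm orbT.
Qed.

Lemma maxQ_ge0 Z U : 0 <= maxQ r Z U.
Proof. exact: le_trans (cabs_ge0 Z) (maxQ_ge_cabs Z U). Qed.

Lemma maxQ_ge_term Z U S : (S `<=` U)%fset -> S != fset0 ->
  1 + cabs (Z - 1) * alphaS r S <= maxQ r Z U.
Proof. by move=> SU S0; apply: (le_bigmax_seq _ S); rewrite ?fpowersetE. Qed.

Lemma maxQ_le Z U M : cabs Z <= M ->
  (forall S, (S `<=` U)%fset -> S != fset0 -> 1 + cabs (Z - 1) * alphaS r S <= M) ->
  maxQ r Z U <= M.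
Proof.
move=> ZM termM; rewrite /maxQ big_seq_cond; apply: bigmax_le => // S.
by rewrite fpowersetE => /andP[]; apply: termM.
Qed.

Lemma maxQ1 U : maxQ r 1 U = 1.
Proof.
apply/le_anti/andP; split; last first.
  by have := maxQ_ge_cabs 1 U; rewrite /cabs Normc.normc1.
apply: maxQ_le => [|S _ _]; first by rewrite /cabs Normc.normc1.
by rewrite subrr /cabs Normc.normc0 mul0r addr0.
Qed.

Lemma maxQM Z1 Z2 U : maxQ r (Z1 * Z2) U <= maxQ r Z1 U * maxQ r Z2 U.
Proof.
set m1 := maxQ r Z1 U; set m2 := maxQ r Z2 U.
apply: maxQ_le => [|S SU S0].
  by rewrite /cabs Normc.normcM ler_pM ?cabs_ge0 ?maxQ_ge_cabs.
set a := alphaS r S.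
have a_ge0 : 0 <= a := alphaS_ge0 S.
have cabs_subM1 : cabs (Z1 * Z2 - 1) <= cabs Z1 * cabs (Z2 - 1) + cabs (Z1 - 1).
  have -> : Z1 * Z2 - 1 = Z1 * (Z2 - 1) + (Z1 - 1) by ring.
  by rewrite /cabs -Normc.normcM le_normcD.
apply: le_trans (_ : cabs Z1 * (cabs (Z2 - 1) * a) + (1 + cabs (Z1 - 1) * a) <= _).
  rewrite addrCA lerD2l mulrA -mulrDl.
  exact: ler_wpM2r.
apply: le_trans (_ : m1 * (cabs (Z2 - 1) * a) + m1 <= _).
  apply: lerD; last exact: maxQ_ge_term.
  by rewrite ler_wpM2r ?mulr_ge0 ?cabs_ge0 ?maxQ_ge_cabs.
by rewrite addrC -[X in X + _]mulr1 -mulrDr ler_wpM2l ?maxQ_ge0 ?maxQ_ge_term.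
Qed.

Lemma maxQ_prod (I : Type) (s : seq I) (P : pred I) (F : I -> R[i]) U :
  maxQ r (\prod_(i <- s | P i) F i) U <= \prod_(i <- s | P i) maxQ r (F i) U.
Proof.
apply: (big_rec2 (fun z m => maxQ r z U <= m)); first by rewrite maxQ1.
move=> i z m _ zm; apply: le_trans (maxQM _ _ _) _.
by rewrite ler_wpM2l ?maxQ_ge0.
Qed.

End MaxQ.

Local Open Scope fset_scope.

Section FsetFiber.
Variables (K : choiceType) (Y B : {fset K}).
Hypothesis YB0 : Y `&` B = fset0.

Lemma disjoint_fsetUKI C : C `<=` B -> (Y `|` C) `&` B = C.
Proof. by move=> /fsetIidPl CB; rewrite fsetIUl YB0 fset0U CB. Qed.

Lemma fsetD_fiber_fpowerset :
  [fset X in fpowerset (Y `|` B) | X `\` B == Y] = [fset Y `|` C | C in fpowerset B].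
Proof.
apply/fsetP => X; rewrite !inE /= fpowersetE.
apply/andP/imfsetP => [[_ /eqP XBY]|[C /= + ->]].
  exists (X `&` B); first by rewrite /= fpowersetE fsubsetIr.
  by rewrite -XBY fsetUC fsetID.
rewrite fpowersetE => CB; split; first exact: fsetUS.
have /fsetDidPl YBY : [disjoint Y & B] by rewrite -fsetI_eq0 YB0.
have /eqP CB0 : C `\` B == fset0 by rewrite fsetD_eq0.
by rewrite fsetDUl YBY CB0 fsetU0.
Qed.

End FsetFiber.

Lemma Wcond_disjointE (T : countType) (R : realType) (W : {fset T} -> R[i])
    (Y B : {fset T}) : Y `&` B = fset0 ->
  Wcond W Y B = \prod_(X <- fpowerset (Y `|` B) | X `\` B == Y) W X.
Proof.
move=> YB0; rewrite /Wcond YB0 eqxx [RHS]big_fset_condE fsetD_fiber_fpowerset //.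
rewrite [RHS]big_imfset //= => C1 C2; rewrite !fpowersetE => C1B C2B eqYC.
by rewrite -(disjoint_fsetUKI YB0 C1B) eqYC disjoint_fsetUKI.
Qed.

Theorem lemma4p6 (T : countType) (R : realType) (W : {fset T} -> R[i])
  (r : T -> R) (hr : forall s, 0 <= r s < 1)
  (x : T) (B Y : {fset T}) (hxB : x \notin B) (hxY : x \in Y)
  (hYB : Y `&` B = fset0) :
  maxQ r (Wcond W Y B) (Y `\ x)
  <= \prod_(X <- fpowerset (Y `|` B) | (x \in X) && (X `\` B == Y))
       maxQ r (W X) (X `\` (x |` B)).
Proof.
have fiber_mem_x X : (X `\` B == Y) = (x \in X) && (X `\` B == Y).
  case: eqP => [XBY|]; last by rewrite andbF.
  by move: hxY; rewrite -XBY inE => /andP[_ ->].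
rewrite (Wcond_disjointE W hYB) (eq_bigl _ _ fiber_mem_x).
have alpha_r_ge0 s : 0 <= alpha r s := alpha_ge0 (hr s).
rewrite (eq_bigr (fun X => maxQ r (W X) (Y `\ x))); first exact: maxQ_prod.
by move=> X /andP[_ /eqP <-]; rewrite fsetDDl fsetUC.
Qed.
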